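(* For a Lie superalgebra $L$, \[Z^{*}(L)=\bigcap\{\phi(Z(M)) : \phi:M\to L \text{ is an epimorphism of Lie superalgebras with } \ker\phi\subseteq Z(M)\}.\]
   Context: All algebras are over a field $\mathbb{F}$ of characteristic $\neq 2,3$. A Lie superalgebra $L$ is capable if $L\cong H/Z(H)$ for some Lie superalgebra $H$. The epicenter $Z^{*}(L)$ is the smallest graded ideal $I$ of $L$ such that $L/I$ is capable. Homomorphisms of Lie superalgebras are even (degree-preserving). *)

From HB Require Import structures.
From mathcomp Require Import all_boot all_order all_algebra.
Set Implicit Arguments. Unset Strict Implicit. Unset Printing Implicit Defensive.
Import GRing.Theory.
Local Open Scope ring_scope.

Definition ssign (R : pzRingType) (b : bool) : R := (-1) ^+ b.

(* A Lie superalgebra over F: an F-vector space V with a linear idempotent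
   projection [even] onto the even part V0 (whose kernel is the odd part V1),
   so V = V0 (+) V1, together with a bilinear bracket satisfying the graded
   conditions, super skew-symmetry and the super Jacobi identity on
   homogeneous elements. *)
Record LieSA (F : fieldType) := {
  carrier : lmodType F;
  even : carrier -> carrier;
  lie : carrier -> carrier -> carrier;
  even_lin : forall (a : F) x y, even (a *: x + y) = a *: even x + even y;
  even_idem : forall x, even (even x) = even x;
  lie_linl : forall (a : F) x y z, lie (a *: x + y) z = a *: lie x z + lie y z;
  lie_linr : forall (a : F) x y z, lie x (a *: y + z) = a *: lie x y + lie x z;
  (* homogeneity of parity p : even x = x if p = false (even), 0 if odd *)
  lie_graded : forall (p q : bool) x y,
      even x = (if p then 0 else x) -> even y = (if q then 0 else y) ->
      even (lie x y) = (if p (+) q then 0 else lie x y);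
  lie_superskew : forall (p q : bool) x y,
      even x = (if p then 0 else x) -> even y = (if q then 0 else y) ->
      lie x y = - (ssign F (p && q) *: lie y x);
  lie_superjacobi : forall (p q r : bool) x y z,
      even x = (if p then 0 else x) -> even y = (if q then 0 else y) ->
      even z = (if r then 0 else z) ->
      ssign F (p && r) *: lie x (lie y z) + ssign F (q && p) *: lie y (lie z x)
        + ssign F (r && q) *: lie z (lie x y) = 0
}.

Arguments carrier {F}.
Arguments even {F}.
Arguments lie {F}.

Definition homog (F : fieldType) (L : LieSA F) (p : bool) (x : carrier L) :=
  even L x = (if p then 0 else x).

Record LieSAhom (F : fieldType) (L M : LieSA F) := {
  homf :> carrier L -> carrier M;
  homf_lin : forall (a : F) x y, homf (a *: x + y) = a *: homf x + homf y;
  homf_lie : forall x y, homf (lie L x y) = lie M (homf x) (homf y);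
  homf_even : forall x, homf (even L x) = even M (homf x)
}.

Definition epi (F : fieldType) (L M : LieSA F) (f : LieSAhom L M) :=
  forall y : carrier M, exists x, f x = y.

Definition center (F : fieldType) (L : LieSA F) (z : carrier L) : Prop :=
  forall x, lie L z x = 0.

Definition graded_ideal (F : fieldType) (L : LieSA F) (I : carrier L -> Prop) :=
  [/\ I 0,
      (forall (a : F) x y, I x -> I y -> I (a *: x + y)),
      (forall x, I x -> I (even L x)) &
      (forall x y, I y -> I (lie L x y))].

(* L is capable: L ~= H / Z(H) for some H, i.e. (first isomorphism theorem)
   there is an epimorphism H ->> L with kernel exactly Z(H). *)
Definition capable (F : fieldType) (L : LieSA F) : Prop :=
  exists (H : LieSA F) (f : LieSAhom H L),
    epi f /\ forall h, f h = 0 <-> center h.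

(* L / I is capable: some (equivalently, any) Lie superalgebra Q with an
   epimorphism L ->> Q of kernel I (i.e. Q ~= L/I) is capable. *)
Definition quot_capable (F : fieldType) (L : LieSA F) (I : carrier L -> Prop) :=
  exists (Q : LieSA F) (p : LieSAhom L Q),
    [/\ epi p, (forall x, p x = 0 <-> I x) & capable Q].

Definition is_epicenter (F : fieldType) (L : LieSA F) (I : carrier L -> Prop) :=
  [/\ graded_ideal I, quot_capable I &
      forall J, graded_ideal J -> quot_capable J -> forall x, I x -> J x].

(* Write Z^* for the intersection. Taking phi = id gives Z^* <= Z(L), and
   Z^* is a graded ideal since centers are graded subspaces.
   Minimality: if L/J = H/Z(H), the fibre product of L and H over L/J is a
   central extension of L whose center maps into J.
   Capability of L/Z^*: pairs (x, s), with x in L and s a formal combination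
   of brackets, identified when they agree in L and s has the same value under
   (x, y) |-> [sg x, sg y] in every central extension M ->> L with section sg,
   form a Lie superalgebra whose center is exactly the kernel of its
   projection onto L/Z^*. *)

From HB Require Import structures.
From mathcomp Require Import all_boot all_order all_algebra generic_quotient.
From Stdlib Require Import ClassicalEpsilon.
Import GRing.Theory.
Local Open Scope ring_scope.
Local Open Scope quotient_scope.

Set Implicit Arguments.
Unset Strict Implicit.
Unset Printing Implicit Defensive.

HB.instance Definition _ (F : fieldType) (L : LieSA F) :=
  GRing.isLinear.Build F (carrier L) (carrier L) *:%R (even L) (@even_lin F L).

HB.instance Definition _ (F : fieldType) (L : LieSA F) (x : carrier L) :=
  GRing.isLinear.Build F (carrier L) (carrier L) *:%R (lie L x)
    (fun a => @lie_linr F L a x).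

HB.instance Definition _ (F : fieldType) (M L : LieSA F) (g : LieSAhom M L) :=
  GRing.isLinear.Build F (carrier M) (carrier L) *:%R (homf g) (homf_lin g).

Section LieSATheory.
Variables (F : fieldType) (L : LieSA F).
Local Notation V := (carrier L).
Implicit Types (x y z w : V) (p q r : bool).

Lemma lie0l z : lie L 0 z = 0.
Proof.
have := lie_linl 1 0 0 z; rewrite scaler0 addr0 scale1r => h.
by apply: (@addrI _ (lie L 0 z)); rewrite addr0 -h.
Qed.

Lemma lieDl x y z : lie L (x + y) z = lie L x z + lie L y z.
Proof. by have := lie_linl 1 x y z; rewrite !scale1r. Qed.

Lemma lieZl a x z : lie L (a *: x) z = a *: lie L x z.
Proof. by have := lie_linl a x 0 z; rewrite !addr0 lie0l addr0. Qed.

Lemma lieNl x z : lie L (- x) z = - lie L x z.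
Proof. by rewrite -scaleN1r lieZl scaleN1r. Qed.

Lemma lieBl x y z : lie L (x - y) z = lie L x z - lie L y z.
Proof. by rewrite lieDl lieNl. Qed.

Definition hpart p x : V := if p then x - even L x else even L x.
Arguments hpart : simpl never.

Lemma hpart_is_linear p : linear (hpart p).
Proof. by case: p => a x y; rewrite /hpart linearP // scalerBr addrACA opprD. Qed.

HB.instance Definition _ p :=
  GRing.isLinear.Build F V V *:%R (hpart p) (hpart_is_linear p).

Lemma hpart_homog p x : homog p (hpart p x).
Proof. by case: p; rewrite /homog /hpart ?linearB /= even_idem ?subrr. Qed.

Lemma hpart_sum x : hpart false x + hpart true x = x.
Proof. by rewrite /hpart addrC subrK. Qed.

Lemma hpartE p r w : homog r w -> hpart p w = if p == r then w else 0.
Proof. by case: p; case: r; rewrite /homog /hpart => ->; rewrite ?subr0 ?subrr. Qed.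

Lemma hpart_id p w : homog p w -> hpart p w = w.
Proof. by move/(hpartE p); rewrite eqxx. Qed.

Lemma lie_hparts x y :
  lie L x y = lie L (hpart false x) (hpart false y) + lie L (hpart false x) (hpart true y)
            + (lie L (hpart true x) (hpart false y) + lie L (hpart true x) (hpart true y)).
Proof. by rewrite -{1}(hpart_sum x) -{1}(hpart_sum y) lieDl !linearD. Qed.

(* The parity of the bracket lets one read off [x_p, y] from [x, y]. *)
Lemma lie_hpartl p q x y :
  homog q y -> lie L (hpart p x) y = hpart (p (+) q) (lie L x y).
Proof.
move=> hy; rewrite -{2}(hpart_sum x) lieDl linearD /=.
rewrite !(hpartE _ (lie_graded (hpart_homog _ x) hy)); clear hy.
by case: p; case: q; rewrite /= ?eqxx ?addr0 ?add0r.
Qed.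

Lemma center_hpart p z : center z -> center (hpart p z).
Proof.
move=> cz x; rewrite -(hpart_sum x) linearD /=.
by rewrite !(lie_hpartl _ _ (hpart_homog _ x)) !cz !linear0 addr0.
Qed.

Lemma lier_center z : center z -> forall x, lie L x z = 0.
Proof.
move=> cz x; rewrite lie_hparts.
have skew p q : lie L (hpart p x) (hpart q z) = 0.
  rewrite (lie_superskew (hpart_homog p x) (hpart_homog q z)).
  by rewrite center_hpart // scaler0 oppr0.
by rewrite !skew !addr0.
Qed.

Lemma center_lin a x y : center x -> center y -> center (a *: x + y).
Proof. by move=> cx cy w; rewrite lie_linl cx cy scaler0 addr0. Qed.

Lemma center0 : center (0 : V).
Proof. by move=> x; rewrite lie0l. Qed.

End LieSATheory.

Arguments hpart {F L} p x : simpl never.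

Lemma homf_hpart (F : fieldType) (M L : LieSA F) (g : LieSAhom M L) p x :
  g (hpart p x) = hpart p (g x).
Proof. by case: p; rewrite /hpart ?linearB /= homf_even. Qed.

(** * Quotients of setoid Lie superalgebras *)

(* A Lie superalgebra whose axioms hold only up to a congruence [seqv];
   homogeneity is likewise only required up to [seqv]. *)
Record LieSetoid (F : fieldType) := {
  ssort : choiceType;
  szero : ssort;
  sadd : ssort -> ssort -> ssort;
  sopp : ssort -> ssort;
  sscale : F -> ssort -> ssort;
  seven : ssort -> ssort;
  slie : ssort -> ssort -> ssort;
  seqv : ssort -> ssort -> Prop;
  seqv_refl : forall a, seqv a a;
  seqv_sym : forall a b, seqv a b -> seqv b a;
  seqv_trans : forall a b c, seqv a b -> seqv b c -> seqv a c;
  sadd_eqv : forall a a' b b', seqv a a' -> seqv b b' -> seqv (sadd a b) (sadd a' b');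
  sopp_eqv : forall a a', seqv a a' -> seqv (sopp a) (sopp a');
  sscale_eqv : forall x a a', seqv a a' -> seqv (sscale x a) (sscale x a');
  seven_eqv : forall a a', seqv a a' -> seqv (seven a) (seven a');
  slie_eqv : forall a a' b b', seqv a a' -> seqv b b' -> seqv (slie a b) (slie a' b');
  saddA : forall a b c, seqv (sadd a (sadd b c)) (sadd (sadd a b) c);
  saddC : forall a b, seqv (sadd a b) (sadd b a);
  sadd0 : forall a, seqv (sadd szero a) a;
  saddN : forall a, seqv (sadd (sopp a) a) szero;
  sscaleA : forall x y a, seqv (sscale x (sscale y a)) (sscale (x * y) a);
  sscale1 : forall a, seqv (sscale 1 a) a;
  sscaleDr : forall x a b, seqv (sscale x (sadd a b)) (sadd (sscale x a) (sscale x b));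
  sscaleDl : forall x y a, seqv (sscale (x + y) a) (sadd (sscale x a) (sscale y a));
  seven_lin : forall x a b,
    seqv (seven (sadd (sscale x a) b)) (sadd (sscale x (seven a)) (seven b));
  seven_idem : forall a, seqv (seven (seven a)) (seven a);
  slie_linl : forall x a b c,
    seqv (slie (sadd (sscale x a) b) c) (sadd (sscale x (slie a c)) (slie b c));
  slie_linr : forall x a b c,
    seqv (slie a (sadd (sscale x b) c)) (sadd (sscale x (slie a b)) (slie a c));
  slie_graded : forall (p q : bool) a b,
    seqv (seven a) (if p then szero else a) -> seqv (seven b) (if q then szero else b) ->
    seqv (seven (slie a b)) (if p (+) q then szero else slie a b);
  slie_superskew : forall (p q : bool) a b,
    seqv (seven a) (if p then szero else a) -> seqv (seven b) (if q then szero else b) ->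
    seqv (slie a b) (sopp (sscale (ssign F (p && q)) (slie b a)));
  slie_superjacobi : forall (p q r : bool) a b c,
    seqv (seven a) (if p then szero else a) -> seqv (seven b) (if q then szero else b) ->
    seqv (seven c) (if r then szero else c) ->
    seqv (sadd (sadd (sscale (ssign F (p && r)) (slie a (slie b c)))
                     (sscale (ssign F (q && p)) (slie b (slie c a))))
               (sscale (ssign F (r && q)) (slie c (slie a b)))) szero
}.

Section SetoidQuotient.
Variables (F : fieldType) (S : LieSetoid F).
Local Notation T := (ssort S).
Local Notation eqv := (@seqv _ S).

Definition seqvb (a b : T) : bool :=
  if excluded_middle_informative (eqv a b) then true else false.

Lemma seqvbP a b : reflect (eqv a b) (seqvb a b).
Proof. by rewrite /seqvb; case: excluded_middle_informative => h; constructor. Qed.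

Lemma seqvb_equiv : equiv_class_of seqvb.
Proof.
split=> [a | a b | b a c /seqvbP h1 /seqvbP h2].
- exact/seqvbP/seqv_refl.
- by apply/seqvbP/seqvbP; apply: seqv_sym.
- exact/seqvbP/(seqv_trans h1 h2).
Qed.

Definition seqv_rel := EquivRelPack seqvb_equiv.
Definition squot := {eq_quot seqv_rel}.
HB.instance Definition _ := Choice.on squot.
HB.instance Definition _ := Quotient.on squot.

Definition spi (a : T) : squot := \pi_squot a.

Lemma spi_eq a b : spi a = spi b <-> eqv a b.
Proof. by split=> [/eqmodP/seqvbP | h]; last apply/eqmodP/seqvbP. Qed.

Lemma seqv_repr a : eqv (repr (spi a)) a.
Proof. by apply/spi_eq; rewrite /spi reprK. Qed.

Lemma squot_ind (P : squot -> Prop) : (forall a, P (spi a)) -> forall X, P X.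
Proof. by move=> hP X; rewrite -(reprK X); apply: hP. Qed.

(* Locked, so that conversion never exposes the choice of representatives. *)
Definition qadd := locked (fun X Y : squot => spi (sadd (repr X) (repr Y))).
Definition qopp := locked (fun X : squot => spi (sopp (repr X))).
Definition qscale := locked (fun x (X : squot) => spi (sscale x (repr X))).
Definition qeven := locked (fun X : squot => spi (seven (repr X))).
Definition qlie := locked (fun X Y : squot => spi (slie (repr X) (repr Y))).

Lemma qaddE a b : qadd (spi a) (spi b) = spi (sadd a b).
Proof. by rewrite /qadd -lock; apply/spi_eq/sadd_eqv; apply: seqv_repr. Qed.
Lemma qoppE a : qopp (spi a) = spi (sopp a).
Proof. by rewrite /qopp -lock; apply/spi_eq/sopp_eqv; apply: seqv_repr. Qed.
Lemma qscaleE x a : qscale x (spi a) = spi (sscale x a).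
Proof. by rewrite /qscale -lock; apply/spi_eq/sscale_eqv; apply: seqv_repr. Qed.
Lemma qevenE a : qeven (spi a) = spi (seven a).
Proof. by rewrite /qeven -lock; apply/spi_eq/seven_eqv; apply: seqv_repr. Qed.
Lemma qlieE a b : qlie (spi a) (spi b) = spi (slie a b).
Proof. by rewrite /qlie -lock; apply/spi_eq/slie_eqv; apply: seqv_repr. Qed.
Definition squotE := (qaddE, qoppE, qscaleE, qevenE, qlieE).

Lemma qaddA : associative qadd.
Proof. by do 3!elim/squot_ind=> ?; rewrite !squotE; apply/spi_eq/saddA. Qed.
Lemma qaddC : commutative qadd.
Proof. by do 2!elim/squot_ind=> ?; rewrite !squotE; apply/spi_eq/saddC. Qed.
Lemma qadd0 : left_id (spi (szero S)) qadd.
Proof. by elim/squot_ind=> ?; rewrite !squotE; apply/spi_eq/sadd0. Qed.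
Lemma qaddN : left_inverse (spi (szero S)) qopp qadd.
Proof. by elim/squot_ind=> ?; rewrite !squotE; apply/spi_eq/saddN. Qed.
HB.instance Definition _ := GRing.isZmodule.Build squot qaddA qaddC qadd0 qaddN.

Lemma spi0 : spi (szero S) = 0. Proof. by []. Qed.
Lemma spi_add a b : spi a + spi b = spi (sadd a b). Proof. exact: qaddE. Qed.
Lemma spi_opp a : - spi a = spi (sopp a). Proof. exact: qoppE. Qed.

Lemma qscaleA x y (X : squot) : qscale x (qscale y X) = qscale (x * y) X.
Proof. by elim/squot_ind: X => ?; rewrite !squotE; apply/spi_eq/sscaleA. Qed.
Lemma qscale1 : left_id 1 qscale.
Proof. by elim/squot_ind=> ?; rewrite !squotE; apply/spi_eq/sscale1. Qed.
Lemma qscaleDr : right_distributive qscale +%R.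
Proof.
by move=> x; do 2!elim/squot_ind=> ?; rewrite spi_add !qscaleE spi_add; apply/spi_eq/sscaleDr.
Qed.
Lemma qscaleDl (X : squot) : {morph qscale^~ X : x y / x + y}.
Proof.
by elim/squot_ind: X => a x y; rewrite /= !qscaleE spi_add; apply/spi_eq/sscaleDl.
Qed.
HB.instance Definition _ :=
  GRing.Zmodule_isLmodule.Build F squot qscaleA qscale1 qscaleDr qscaleDl.

Lemma spi_scale x a : x *: spi a = spi (sscale x a). Proof. exact: qscaleE. Qed.
Definition spiE := (spi_add, spi_opp, spi_scale, qevenE, qlieE).

Lemma seqv_homog (p : bool) a :
  qeven (spi a) = (if p then 0 else spi a) -> eqv (seven a) (if p then szero S else a).
Proof. by rewrite qevenE; case: p => /spi_eq. Qed.

Definition squot_LieSA : LieSA F.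
refine (@Build_LieSA F squot qeven qlie _ _ _ _ _ _ _).
- by move=> x; do 2!elim/squot_ind=> ?; rewrite !spiE; apply/spi_eq/seven_lin.
- by elim/squot_ind=> ?; rewrite !spiE; apply/spi_eq/seven_idem.
- by move=> x; do 3!elim/squot_ind=> ?; rewrite !spiE; apply/spi_eq/slie_linl.
- by move=> x; do 3!elim/squot_ind=> ?; rewrite !spiE; apply/spi_eq/slie_linr.
- move=> p q; do 2!elim/squot_ind=> ?; move=> /seqv_homog ha /seqv_homog hb.
  by rewrite qlieE qevenE; case: (p (+) q) (slie_graded ha hb) => /spi_eq.
- move=> p q; do 2!elim/squot_ind=> ?; move=> /seqv_homog ha /seqv_homog hb.
  by rewrite !spiE; apply/spi_eq/slie_superskew.
- move=> p q r; do 3!elim/squot_ind=> ?; move=> /seqv_homog ha /seqv_homog hb /seqv_homog hc.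
  by rewrite !spiE; apply/spi_eq/slie_superjacobi.
Defined.

End SetoidQuotient.

(** * Quotient by a graded ideal *)

Section IdealQuotient.
Variables (F : fieldType) (L : LieSA F) (I : carrier L -> Prop).
Hypothesis idealI : graded_ideal I.
Local Notation V := (carrier L).
Implicit Types (a b c x y : V) (p q r : bool).

Lemma ideal0 : I 0.
Proof. by case: idealI. Qed.

Lemma ideal_lin s x y : I x -> I y -> I (s *: x + y).
Proof. by case: idealI => _ + _ _; apply. Qed.

Lemma idealD x y : I x -> I y -> I (x + y).
Proof. by move=> Ix Iy; have := ideal_lin 1 Ix Iy; rewrite scale1r. Qed.

Lemma idealZ s x : I x -> I (s *: x).
Proof. by move=> Ix; have := ideal_lin s Ix ideal0; rewrite addr0. Qed.

Lemma idealN x : I x -> I (- x).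
Proof. by rewrite -scaleN1r; apply: idealZ. Qed.

Lemma ideal_even x : I x -> I (even L x).
Proof. by case: idealI => _ _ + _; apply. Qed.

Lemma ideal_hpart p x : I x -> I (hpart p x).
Proof.
move=> Ix; have Ie := ideal_even Ix.
by case: p; rewrite /hpart //; apply: idealD => //; apply: idealN.
Qed.

Lemma ideal_lier x y : I y -> I (lie L x y).
Proof. by case: idealI => _ _ _; apply. Qed.

(* Graded ideals are two-sided, by super skew-symmetry on homogeneous parts. *)
Lemma ideal_liel x y : I x -> I (lie L x y).
Proof.
move=> Ix; have Ih p q : I (lie L (hpart p x) (hpart q y)).
  rewrite (lie_superskew (hpart_homog p x) (hpart_homog q y)).
  by apply/idealN/idealZ/ideal_lier/ideal_hpart.
by rewrite lie_hparts; apply: idealD; apply: idealD.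
Qed.

Definition eqvI a b := I (a - b).

Lemma eqvI_refl a : eqvI a a.
Proof. by rewrite /eqvI subrr; apply: ideal0. Qed.

Lemma eqvI_sym a b : eqvI a b -> eqvI b a.
Proof. by move=> h; rewrite /eqvI -opprB; apply: idealN. Qed.

Lemma eqvI_trans a b c : eqvI a b -> eqvI b c -> eqvI a c.
Proof. by move=> h1 h2; rewrite /eqvI -(subrKA b); apply: idealD. Qed.

Lemma eqvI_eq a b : a = b -> eqvI a b.
Proof. by move->; apply: eqvI_refl. Qed.

Lemma eqvI_add a a' b b' : eqvI a a' -> eqvI b b' -> eqvI (a + b) (a' + b').
Proof. by move=> h1 h2; rewrite /eqvI opprD addrACA; apply: idealD. Qed.

Lemma eqvI_scale s a a' : eqvI a a' -> eqvI (s *: a) (s *: a').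
Proof. by move=> h; rewrite /eqvI -scalerBr; apply: idealZ. Qed.

Lemma eqvI_opp a a' : eqvI a a' -> eqvI (- a) (- a').
Proof. by rewrite -!scaleN1r; apply: eqvI_scale. Qed.

Lemma eqvI_even a a' : eqvI a a' -> eqvI (even L a) (even L a').
Proof. by move=> h; rewrite /eqvI -linearB; apply: ideal_even. Qed.

Lemma eqvI_lie a a' b b' : eqvI a a' -> eqvI b b' -> eqvI (lie L a b) (lie L a' b').
Proof.
move=> ha hb; apply: (@eqvI_trans _ (lie L a' b)).
  by rewrite /eqvI -lieBl; apply: ideal_liel.
by rewrite /eqvI -linearB; apply: ideal_lier.
Qed.

Lemma eqvI_hpart p a : eqvI (even L a) (if p then 0 else a) -> eqvI a (hpart p a).
Proof.
rewrite /eqvI /hpart; case: p => h.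
- by rewrite opprB addrC subrK; rewrite subr0 in h.
- by rewrite -opprB; apply: idealN.
Qed.

Lemma eqvI_homog r a c :
  eqvI a c -> homog r c -> eqvI (even L a) (if r then 0 else a).
Proof.
move=> hac hc; have Ie := ideal_even hac; rewrite linearB /= hc in Ie.
case: r {hc} Ie => // Ie.
rewrite /eqvI -(subrKA c); apply: idealD => //.
by rewrite -opprB; apply: idealN.
Qed.

Lemma eqvI_lie_graded p q a b :
  eqvI (even L a) (if p then 0 else a) -> eqvI (even L b) (if q then 0 else b) ->
  eqvI (even L (lie L a b)) (if p (+) q then 0 else lie L a b).
Proof.
move=> /eqvI_hpart ha /eqvI_hpart hb; apply: (eqvI_homog (eqvI_lie ha hb)).
exact: lie_graded (hpart_homog p a) (hpart_homog q b).
Qed.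

Lemma eqvI_lie_superskew p q a b :
  eqvI (even L a) (if p then 0 else a) -> eqvI (even L b) (if q then 0 else b) ->
  eqvI (lie L a b) (- (ssign F (p && q) *: lie L b a)).
Proof.
move=> /eqvI_hpart ha /eqvI_hpart hb; apply: eqvI_trans (eqvI_lie ha hb) _.
rewrite (lie_superskew (hpart_homog p a) (hpart_homog q b)).
exact/eqvI_opp/eqvI_scale/eqvI_sym/eqvI_lie.
Qed.

Lemma eqvI_lie_superjacobi p q r a b c :
  eqvI (even L a) (if p then 0 else a) -> eqvI (even L b) (if q then 0 else b) ->
  eqvI (even L c) (if r then 0 else c) ->
  eqvI (ssign F (p && r) *: lie L a (lie L b c) + ssign F (q && p) *: lie L b (lie L c a)
          + ssign F (r && q) *: lie L c (lie L a b)) 0.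
Proof.
move=> /eqvI_hpart ha /eqvI_hpart hb /eqvI_hpart hc.
rewrite -(lie_superjacobi (hpart_homog p a) (hpart_homog q b) (hpart_homog r c)).
by do 2?apply: eqvI_add; apply/eqvI_scale/eqvI_lie/eqvI_lie.
Qed.

Definition ideal_setoid : LieSetoid F :=
  @Build_LieSetoid F V 0 +%R -%R *:%R (even L) (lie L) eqvI
    eqvI_refl eqvI_sym eqvI_trans eqvI_add eqvI_opp eqvI_scale eqvI_even eqvI_lie
    (fun a b c => eqvI_eq (addrA a b c)) (fun a b => eqvI_eq (addrC a b))
    (fun a => eqvI_eq (add0r a)) (fun a => eqvI_eq (addNr a))
    (fun k l a => eqvI_eq (scalerA k l a)) (fun a => eqvI_eq (scale1r a))
    (fun k a b => eqvI_eq (scalerDr k a b)) (fun k l a => eqvI_eq (scalerDl a k l))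
    (fun k a b => eqvI_eq (even_lin k a b)) (fun a => eqvI_eq (even_idem a))
    (fun k a b c => eqvI_eq (lie_linl k a b c)) (fun k a b c => eqvI_eq (lie_linr k a b c))
    eqvI_lie_graded eqvI_lie_superskew eqvI_lie_superjacobi.

Definition quotient : LieSA F := squot_LieSA ideal_setoid.

Definition quot_proj : LieSAhom L quotient.
refine (@Build_LieSAhom F L quotient (@spi F ideal_setoid) _ _ _) => *.
- by rewrite spi_scale spi_add.
- by rewrite /= qlieE.
- by rewrite /= qevenE.
Defined.

Lemma quot_proj_epi : epi quot_proj.
Proof. by elim/squot_ind => a; exists a. Qed.

Lemma quot_proj_ker x : quot_proj x = 0 <-> I x.
Proof. by rewrite /= -spi0 spi_eq /= /eqvI subr0. Qed.

End IdealQuotient.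

(** * The intersection of the images of centers *)

Section Zstar.
Variables (F : fieldType) (L : LieSA F).
Local Notation V := (carrier L).

Definition Zstar (x : V) : Prop :=
  forall (M : LieSA F) (phi : LieSAhom M L),
    epi phi -> (forall m, phi m = 0 -> center m) -> exists2 z, center z & phi z = x.

Definition id_hom : LieSAhom L L := @Build_LieSAhom F L L id
  (fun a x y => erefl) (fun x y => erefl) (fun x => erefl).

Lemma Zstar_center x : Zstar x -> center x.
Proof.
move=> Zx; have [|m /= ->|z cz <-] // := Zx L id_hom; last exact: center0.
by move=> y; exists y.
Qed.

Lemma Zstar0 : Zstar 0.
Proof. by move=> M phi _ _; exists 0; [apply: center0 | apply: linear0]. Qed.

Lemma Zstar_graded_ideal : graded_ideal Zstar.
Proof.
split=> [|a x y Zx Zy M phi ephi kphi | x Zx M phi ephi kphi | x y Zy]; first exact: Zstar0.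
- have [z1 c1 <-] := Zx M phi ephi kphi; have [z2 c2 <-] := Zy M phi ephi kphi.
  by exists (a *: z1 + z2); [apply: center_lin | apply: homf_lin].
- have [z cz <-] := Zx M phi ephi kphi.
  by exists (even M z); [apply: (center_hpart false cz) | apply: homf_even].
- by rewrite lier_center; [apply: Zstar0 | apply: Zstar_center].
Qed.

End Zstar.

Arguments Zstar {F} L x.

(** * Central extensions with a set-theoretic section *)

Section CentralSection.
Variables (F : fieldType) (L M : LieSA F) (phi : LieSAhom M L).
Variable sg : carrier L -> carrier M.
Hypothesis kphi : forall m, phi m = 0 -> center m.
Hypothesis sgK : cancel sg phi.
Local Notation V := (carrier L).
Implicit Types (x y w : V) (p q r : bool).

Lemma lie_eq_mod_ker m m' n n' :
  phi m = phi m' -> phi n = phi n' -> lie M m n = lie M m' n'.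
Proof.
move=> em en.
have cm : center (m - m') by apply: kphi; rewrite linearB /= em subrr.
have cn : center (n - n') by apply: kphi; rewrite linearB /= en subrr.
rewrite -(subrK m' m) -(subrK n' n) lieDl cm add0r linearD /=.
by rewrite lier_center // add0r.
Qed.

Definition sec_lie x y := lie M (sg x) (sg y).

Lemma sec_lie_linl a x y w : sec_lie (a *: x + y) w = a *: sec_lie x w + sec_lie y w.
Proof. by rewrite /sec_lie -lie_linl; apply: lie_eq_mod_ker; rewrite // homf_lin !sgK. Qed.

Lemma sec_lie_linr a x y w : sec_lie w (a *: x + y) = a *: sec_lie w x + sec_lie w y.
Proof. by rewrite /sec_lie -lie_linr; apply: lie_eq_mod_ker; rewrite // homf_lin !sgK. Qed.

Lemma sec_lie_hpart p q x y : homog p x -> homog q y ->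
  sec_lie x y = lie M (hpart p (sg x)) (hpart q (sg y)).
Proof. by move=> hx hy; apply: lie_eq_mod_ker; rewrite homf_hpart sgK hpart_id. Qed.

Lemma even_sec_lie x y :
  even M (sec_lie x y) = sec_lie (even L x) (even L y) + sec_lie (hpart true x) (hpart true y).
Proof.
rewrite /sec_lie lie_hparts !(linearD (even M)) /=.
rewrite !(lie_graded (hpart_homog _ _) (hpart_homog _ _)).
rewrite /= !addr0 add0r.
by congr (_ + _); apply: lie_eq_mod_ker; rewrite homf_hpart sgK.
Qed.

Lemma sec_lie_superskew p q x y : homog p x -> homog q y ->
  sec_lie x y = - (ssign F (p && q) *: sec_lie y x).
Proof.
move=> hx hy; rewrite (sec_lie_hpart hx hy) (sec_lie_hpart hy hx).
exact: lie_superskew (hpart_homog _ _) (hpart_homog _ _).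
Qed.

Lemma sec_lie_lie_hpart p q r x y w : homog p x -> homog q y -> homog r w ->
  sec_lie x (lie L y w) = lie M (hpart p (sg x)) (lie M (hpart q (sg y)) (hpart r (sg w))).
Proof.
move=> hx hy hw; apply: lie_eq_mod_ker; rewrite ?homf_lie !homf_hpart !sgK;
by rewrite !hpart_id.
Qed.

Lemma sec_lie_superjacobi p q r x y w : homog p x -> homog q y -> homog r w ->
  ssign F (p && r) *: sec_lie x (lie L y w) + ssign F (q && p) *: sec_lie y (lie L w x)
    + ssign F (r && q) *: sec_lie w (lie L x y) = 0.
Proof.
move=> hx hy hw; rewrite (sec_lie_lie_hpart hx hy hw) (sec_lie_lie_hpart hy hw hx).
rewrite (sec_lie_lie_hpart hw hx hy).
exact: lie_superjacobi (hpart_homog _ _) (hpart_homog _ _) (hpart_homog _ _).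
Qed.

(* A term [(a, x, y)] stands for the formal bracket [a [x, y]]. *)
Definition eval_terms (s : seq (F * V * V)) : carrier M :=
  \sum_(t <- s) t.1.1 *: sec_lie t.1.2 t.2.

Definition scale_terms (a : F) (s : seq (F * V * V)) :=
  [seq (a * t.1.1, t.1.2, t.2) | t <- s].

Definition even_terms (s : seq (F * V * V)) :=
  flatten [seq [:: (t.1.1, even L t.1.2, even L t.2);
                   (t.1.1, hpart true t.1.2, hpart true t.2)] | t <- s].

Lemma eval_terms_nil : eval_terms [::] = 0.
Proof. exact: big_nil. Qed.

Lemma eval_terms_cat s t : eval_terms (s ++ t) = eval_terms s + eval_terms t.
Proof. exact: big_cat. Qed.

Lemma eval_terms1 a x y : eval_terms [:: (a, x, y)] = a *: sec_lie x y.
Proof. by rewrite /eval_terms big_seq1. Qed.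

Lemma eval_scale_terms a s : eval_terms (scale_terms a s) = a *: eval_terms s.
Proof.
by rewrite /eval_terms big_map scaler_sumr; apply: eq_bigr => t _; rewrite scalerA.
Qed.

Lemma eval_even_terms s : eval_terms (even_terms s) = even M (eval_terms s).
Proof.
rewrite /eval_terms /even_terms big_flatten big_map linear_sum /=.
apply: eq_bigr => t _.
by rewrite !big_cons big_nil addr0 linearZ /= even_sec_lie scalerDr.
Qed.

End CentralSection.

(** * A capable cover of [L / Z^*(L)] *)

Section Cover.
Variables (F : fieldType) (L : LieSA F).
Local Notation V := (carrier L).

Definition central_section (M : LieSA F) (phi : LieSAhom M L) (sg : V -> carrier M) :=
  (forall m, phi m = 0 -> center m) /\ cancel sg phi.

Definition cover_sort : choiceType := (V * seq (F * V * V))%type.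

(* A pair [(x, s)] stands for an element of a universal central extension
   lying over [x]; [s] is recorded only through its values in all central
   extensions of [L] with a section. *)
Definition cover_eqv (u v : cover_sort) := u.1 = v.1 /\
  forall (M : LieSA F) (phi : LieSAhom M L) (sg : V -> carrier M),
    central_section phi sg -> eval_terms sg u.2 = eval_terms sg v.2.

Definition cover_zero : cover_sort := (0, [::]).
Definition cover_add (u v : cover_sort) : cover_sort := (u.1 + v.1, u.2 ++ v.2).
Definition cover_opp (u : cover_sort) : cover_sort := (- u.1, scale_terms (-1) u.2).
Definition cover_scale a (u : cover_sort) : cover_sort := (a *: u.1, scale_terms a u.2).
Definition cover_even (u : cover_sort) : cover_sort := (even L u.1, even_terms u.2).
Definition cover_lie (u v : cover_sort) : cover_sort :=
  (lie L u.1 v.1, [:: (1, u.1, v.1)]).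

Lemma cover_eqv_homog (p : bool) u :
  cover_eqv (cover_even u) (if p then cover_zero else u) -> homog p u.1.
Proof. by case: p => -[]. Qed.

Local Ltac cover_split := split=> /=; last move=> M phi sg H.

Lemma cover_eqv_lie_graded p q u v :
  cover_eqv (cover_even u) (if p then cover_zero else u) ->
  cover_eqv (cover_even v) (if q then cover_zero else v) ->
  cover_eqv (cover_even (cover_lie u v)) (if p (+) q then cover_zero else cover_lie u v).
Proof.
move=> /cover_eqv_homog hu /cover_eqv_homog hv; cover_split.
  by rewrite (lie_graded hu hv); case: (p (+) q).
case: H => kphi sgK; rewrite (eval_even_terms kphi sgK) eval_terms1 scale1r.
rewrite (sec_lie_hpart kphi sgK hu hv) (lie_graded (hpart_homog _ _) (hpart_homog _ _)).
case: (p (+) q); rewrite ?eval_terms_nil // eval_terms1 scale1r.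
by rewrite (sec_lie_hpart kphi sgK hu hv).
Qed.

Lemma cover_eqv_lie_superskew p q u v :
  cover_eqv (cover_even u) (if p then cover_zero else u) ->
  cover_eqv (cover_even v) (if q then cover_zero else v) ->
  cover_eqv (cover_lie u v) (cover_opp (cover_scale (ssign F (p && q)) (cover_lie v u))).
Proof.
move=> /cover_eqv_homog hu /cover_eqv_homog hv; cover_split.
  by rewrite (lie_superskew hu hv).
case: H => kphi sgK; rewrite !eval_terms1 scale1r mulr1 mulN1r scaleNr.
by rewrite (sec_lie_superskew kphi sgK hu hv).
Qed.

Lemma cover_eqv_lie_superjacobi p q r u v w :
  cover_eqv (cover_even u) (if p then cover_zero else u) ->
  cover_eqv (cover_even v) (if q then cover_zero else v) ->
  cover_eqv (cover_even w) (if r then cover_zero else w) ->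
  cover_eqv (cover_add (cover_add
      (cover_scale (ssign F (p && r)) (cover_lie u (cover_lie v w)))
      (cover_scale (ssign F (q && p)) (cover_lie v (cover_lie w u))))
      (cover_scale (ssign F (r && q)) (cover_lie w (cover_lie u v)))) cover_zero.
Proof.
move=> /cover_eqv_homog hu /cover_eqv_homog hv /cover_eqv_homog hw.
cover_split; first by rewrite (lie_superjacobi hu hv hw).
case: H => kphi sgK; rewrite /eval_terms !big_cons big_nil /= !mulr1 addr0 addrA.
exact: (sec_lie_superjacobi kphi sgK hu hv hw).
Qed.

Definition cover_setoid : LieSetoid F.
refine (@Build_LieSetoid F cover_sort cover_zero cover_add cover_opp cover_scale
  cover_even cover_lie cover_eqv _ _ _ _ _ _ _ _ _ _ _ _ _ _ _ _ _ _ _ _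
  cover_eqv_lie_graded cover_eqv_lie_superskew cover_eqv_lie_superjacobi).
- by move=> u; split.
- by move=> u v [e1 e2]; split=> // M phi sg H; rewrite (e2 _ _ _ H).
- move=> u v w [e1 e2] [f1 f2]; split; first by rewrite e1.
  by move=> M phi sg H; rewrite (e2 _ _ _ H) (f2 _ _ _ H).
- move=> u u' v v' [e1 e2] [f1 f2]; cover_split; first by rewrite e1 f1.
  by rewrite !eval_terms_cat (e2 _ _ _ H) (f2 _ _ _ H).
- move=> u u' [e1 e2]; cover_split; first by rewrite e1.
  by rewrite !eval_scale_terms (e2 _ _ _ H).
- move=> a u u' [e1 e2]; cover_split; first by rewrite e1.
  by rewrite !eval_scale_terms (e2 _ _ _ H).
- move=> u u' [e1 e2]; cover_split; first by rewrite e1.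
  by case: (H) => kphi sgK; rewrite !(eval_even_terms kphi sgK) (e2 _ _ _ H).
- move=> u u' v v' [e1 e2] [f1 f2]; cover_split; by rewrite e1 f1.
- by move=> u v w; cover_split; rewrite ?addrA ?catA.
- by move=> u v; cover_split; rewrite ?(addrC u.1) // !eval_terms_cat addrC.
- by move=> u; cover_split; rewrite ?add0r.
- move=> u; cover_split; first by rewrite addNr.
  by rewrite eval_terms_cat eval_scale_terms scaleN1r addNr eval_terms_nil.
- move=> a b u; cover_split; first by rewrite scalerA.
  by rewrite !eval_scale_terms scalerA.
- by move=> u; cover_split; rewrite ?scale1r // eval_scale_terms scale1r.
- move=> a u v; cover_split; first by rewrite scalerDr.
  by rewrite eval_terms_cat !eval_scale_terms eval_terms_cat scalerDr.
- move=> a b u; cover_split; first by rewrite scalerDl.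
  by rewrite eval_terms_cat !eval_scale_terms scalerDl.
- move=> a u v; cover_split; first by rewrite even_lin.
  case: H => kphi sgK.
  by rewrite !(eval_terms_cat, eval_scale_terms, eval_even_terms kphi sgK) even_lin.
- move=> u; cover_split; first by rewrite even_idem.
  by case: H => kphi sgK; rewrite !(eval_even_terms kphi sgK) even_idem.
- move=> a u v w; cover_split; first by rewrite lie_linl.
  case: H => kphi sgK; rewrite /eval_terms !big_cons !big_nil /= !addr0.
  by rewrite mulr1 !scale1r (sec_lie_linl kphi sgK).
- move=> a u v w; cover_split; first by rewrite lie_linr.
  case: H => kphi sgK; rewrite /eval_terms !big_cons !big_nil /= !addr0.
  by rewrite mulr1 !scale1r (sec_lie_linr kphi sgK).
Defined.

End Cover.

Lemma epi_section (F : fieldType) (M L : LieSA F) (phi : LieSAhom M L) :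
  epi phi -> exists sg : carrier L -> carrier M, cancel sg phi.
Proof.
move=> ephi; exists (fun y => proj1_sig (constructive_indefinite_description _ (ephi y))).
by move=> y; case: constructive_indefinite_description.
Qed.

Section CoverProjection.
Variables (F : fieldType) (L : LieSA F).
Local Notation LZ := (quotient (Zstar_graded_ideal L)).

Definition cover : LieSA F := squot_LieSA (cover_setoid L).

Definition cover_proj_fun (X : carrier cover) : carrier LZ := quot_proj _ (repr X).1.

Lemma cover_proj_spi u : cover_proj_fun (spi u) = quot_proj _ u.1.
Proof. by rewrite /cover_proj_fun; case: (seqv_repr u) => ->. Qed.

Definition cover_proj : LieSAhom cover LZ.
refine (@Build_LieSAhom F cover LZ cover_proj_fun _ _ _).
- move=> a; do 2!elim/squot_ind=> ?; rewrite spi_scale spi_add !cover_proj_spi.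
  exact: homf_lin.
- by do 2!elim/squot_ind=> ?; rewrite /= qlieE !cover_proj_spi homf_lie.
- by elim/squot_ind=> ?; rewrite /= qevenE !cover_proj_spi homf_even.
Defined.

Lemma cover_proj_epi : epi cover_proj.
Proof.
by elim/squot_ind=> x; exists (@spi _ (cover_setoid L) (x, [::])); rewrite /= cover_proj_spi.
Qed.

Lemma cover_proj_ker X : cover_proj X = 0 <-> center X.
Proof.
elim/squot_ind: X => u; rewrite /= cover_proj_spi quot_proj_ker; split.
- move=> Zu; elim/squot_ind=> v; rewrite /= qlieE -spi0; apply/spi_eq.
  split=> [|M phi sg [kphi sgK]]; first exact: (Zstar_center Zu).
  rewrite /= eval_terms1 eval_terms_nil scale1r /sec_lie.
  have [|z cz ez] := Zu M phi _ kphi; first by move=> y; exists (sg y).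
  have -> : lie M (sg u.1) (sg v.1) = lie M z (sg v.1).
    by apply: (lie_eq_mod_ker kphi); rewrite ?sgK ?ez.
  exact: cz.
- move=> cu M phi ephi kphi; have [sg sgK] := epi_section ephi.
  exists (sg u.1) => // m.
  have -> : lie M (sg u.1) m = lie M (sg u.1) (sg (phi m)).
    by apply: (lie_eq_mod_ker kphi); rewrite ?sgK.
  have := cu (@spi _ (cover_setoid L) (phi m, [::])); rewrite /= qlieE -spi0.
  case/spi_eq => _ /(_ M phi sg (conj kphi sgK)).
  by rewrite /= eval_terms1 eval_terms_nil scale1r.
Qed.

Lemma capable_quot_Zstar : capable LZ.
Proof. by exists cover, cover_proj; split; [apply: cover_proj_epi | apply: cover_proj_ker]. Qed.

End CoverProjection.

(** * Fibre products *)

Section Pullback.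
Variables (F : fieldType) (L Q H : LieSA F) (p : LieSAhom L Q) (f : LieSAhom H Q).

Definition pb_sort : choiceType := {u : carrier L * carrier H | p u.1 == f u.2}.

Lemma pb_commute (u : pb_sort) : p (val u).1 = f (val u).2.
Proof. exact/eqP/(valP u). Qed.

Lemma pb_inj (u v : pb_sort) : (val u).1 = (val v).1 -> (val u).2 = (val v).2 -> u = v.
Proof. by move=> e1 e2; apply/val_inj/injective_projections. Qed.

Definition pb_pair x y (pxy : p x = f y) : pb_sort := exist _ (x, y) (introT eqP pxy).

Lemma pb_addP (u v : pb_sort) : p ((val u).1 + (val v).1) = f ((val u).2 + (val v).2).
Proof. by rewrite !linearD /= !pb_commute. Qed.
Lemma pb_oppP (u : pb_sort) : p (- (val u).1) = f (- (val u).2).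
Proof. by rewrite !linearN /= pb_commute. Qed.
Lemma pb_scaleP a (u : pb_sort) : p (a *: (val u).1) = f (a *: (val u).2).
Proof. by rewrite !linearZ /= pb_commute. Qed.
Lemma pb_evenP (u : pb_sort) : p (even L (val u).1) = f (even H (val u).2).
Proof. by rewrite !homf_even pb_commute. Qed.
Lemma pb_lieP (u v : pb_sort) :
  p (lie L (val u).1 (val v).1) = f (lie H (val u).2 (val v).2).
Proof. by rewrite !homf_lie !pb_commute. Qed.

Definition pb_zero := pb_pair (etrans (linear0 p) (esym (linear0 f))).
Definition pb_add u v := pb_pair (pb_addP u v).
Definition pb_opp u := pb_pair (pb_oppP u).
Definition pb_scale a u := pb_pair (pb_scaleP a u).
Definition pb_even u := pb_pair (pb_evenP u).
Definition pb_lie u v := pb_pair (pb_lieP u v).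

Lemma pb_homog (b : bool) (u : pb_sort) : pb_even u = (if b then pb_zero else u) ->
  homog b (val u).1 /\ homog b (val u).2.
Proof.
move=> h; have h1 := congr1 (fun w => (val w).1) h; have h2 := congr1 (fun w => (val w).2) h.
by case: b h1 h2 {h}.
Qed.

Definition pullback_setoid : LieSetoid F.
refine (@Build_LieSetoid F pb_sort pb_zero pb_add pb_opp pb_scale pb_even pb_lie eq
  _ _ _ _ _ _ _ _ _ _ _ _ _ _ _ _ _ _ _ _ _ _ _); try by move=> *; subst.
- by move=> u v w; apply: pb_inj; rewrite /= addrA.
- by move=> u v; apply: pb_inj; rewrite /= addrC.
- by move=> u; apply: pb_inj; rewrite /= add0r.
- by move=> u; apply: pb_inj; rewrite /= addNr.
- by move=> a b u; apply: pb_inj; rewrite /= scalerA.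
- by move=> u; apply: pb_inj; rewrite /= scale1r.
- by move=> a u v; apply: pb_inj; rewrite /= scalerDr.
- by move=> a b u; apply: pb_inj; rewrite /= scalerDl.
- by move=> a u v; apply: pb_inj; rewrite /= even_lin.
- by move=> u; apply: pb_inj; rewrite /= even_idem.
- by move=> a u v w; apply: pb_inj; rewrite /= lie_linl.
- by move=> a u v w; apply: pb_inj; rewrite /= lie_linr.
- move=> b1 b2 u v /pb_homog[hu1 hu2] /pb_homog[hv1 hv2].
  by case: (b1 (+) b2) (lie_graded hu1 hv1) (lie_graded hu2 hv2) => h1 h2; apply: pb_inj.
- move=> b1 b2 u v /pb_homog[hu1 hu2] /pb_homog[hv1 hv2].
  by apply: pb_inj; [exact: lie_superskew hu1 hv1 | exact: lie_superskew hu2 hv2].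
- move=> b1 b2 b3 u v w /pb_homog[hu1 hu2] /pb_homog[hv1 hv2] /pb_homog[hw1 hw2].
  by apply: pb_inj; [exact: lie_superjacobi hu1 hv1 hw1 | exact: lie_superjacobi hu2 hv2 hw2].
Defined.

Definition pullback : LieSA F := squot_LieSA pullback_setoid.

Lemma repr_spi_pb (u : pb_sort) : repr (@spi _ pullback_setoid u) = u.
Proof. exact: (@seqv_repr _ pullback_setoid u). Qed.

Definition pb_fst (X : carrier pullback) : carrier L := (val (repr X)).1.

Lemma pb_fst_spi u : pb_fst (spi u) = (val u).1.
Proof. by rewrite /pb_fst repr_spi_pb. Qed.

Definition pb_proj1 : LieSAhom pullback L.
refine (@Build_LieSAhom F pullback L pb_fst _ _ _).
- by move=> a; do 2!elim/squot_ind=> ?; rewrite spi_scale spi_add !pb_fst_spi.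
- by do 2!elim/squot_ind=> ?; rewrite /= qlieE !pb_fst_spi.
- by elim/squot_ind=> ?; rewrite /= qevenE !pb_fst_spi.
Defined.

Lemma pb_proj1_epi : epi f -> epi pb_proj1.
Proof.
move=> ef x; have [y pxy] := ef (p x).
by exists (@spi _ pullback_setoid (pb_pair (esym pxy))); rewrite /= pb_fst_spi.
Qed.

Lemma pb_proj1_ker : (forall y, f y = 0 -> center y) ->
  forall X, pb_proj1 X = 0 -> center X.
Proof.
move=> kf; elim/squot_ind=> u; rewrite /= pb_fst_spi => u1.
have cu2 : center (val u).2 by apply/kf; rewrite -pb_commute u1 linear0.
elim/squot_ind=> v; rewrite /= qlieE -spi0; apply/spi_eq/pb_inj => /=.
  by rewrite u1 lie0l.
exact: cu2.
Qed.

Lemma pb_center_snd u : epi p -> @center _ pullback (spi u) -> center (val u).2.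
Proof.
move=> ep cu y; have [x pxy] := ep (f y).
have := cu (@spi _ pullback_setoid (pb_pair pxy)); rewrite /= qlieE -spi0.
by move/spi_eq/(congr1 (fun w => (val w).2)).
Qed.

End Pullback.

Lemma Zstar_sub_ker (F : fieldType) (L Q : LieSA F) (p : LieSAhom L Q) :
  epi p -> capable Q -> forall x, Zstar L x -> p x = 0.
Proof.
move=> ep [H [f [ef kf]]] x Zx.
have [|X cX <-] := Zx _ (pb_proj1 p f) (pb_proj1_epi p ef).
  by apply: pb_proj1_ker => y /kf.
elim/squot_ind: X cX => u cu; rewrite /= pb_fst_spi pb_commute.
exact/kf/(pb_center_snd ep cu).
Qed.

Theorem mainTheorem11 (F : fieldType)
  (hF2 : 2%N \notin [pchar F]) (hF3 : 3%N \notin [pchar F]) (L : LieSA F) :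
  is_epicenter (L := L)
    (fun x : carrier L =>
       forall (M : LieSA F) (phi : LieSAhom M L),
         epi phi -> (forall m, phi m = 0 -> center m) ->
         exists2 z, center z & phi z = x).
Proof.
split; first exact: Zstar_graded_ideal.
  exists (quotient (Zstar_graded_ideal L)), (quot_proj _).
  by split; [apply: quot_proj_epi | apply: quot_proj_ker | apply: capable_quot_Zstar].
by move=> J _ [Q [p [ep kp cQ]]] x Zx; apply/kp; apply: Zstar_sub_ker ep cQ x Zx.
Qed.
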